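(* Let $\mathbb{V}$ be the variety in the language consisting of one binary operation symbol $*$ and two constant symbols $p$ and $0$, defined by the laws (writing $a*b*c$ for $(a*b)*c$) $$0*x = x*0 = 0,\qquad x*y*z = x*z*y,\qquad x*(y*z) = 0,\qquad x*y*y = 0.$$ Then $\mathbb{V}$ is a finitely based, locally finite variety which has uncountably many term clones.
   Context: Let $F_{\mathbb{V}}$ denote the free algebra in $\mathbb{V}$ on countably many generators $x_1, x_2, \ldots$. A term clone of $\mathbb{V}$ is a subset $S \subseteq F_{\mathbb{V}}$ which contains all the generators $x_1, x_2, \ldots$ and is closed under substitution: whenever $t(x_1,\ldots,x_n) \in S$ and $t_1,\ldots,t_n \in S$, then $t(t_1,\ldots,t_n) \in S$. (Equivalently, a term clone is a set of term functions of $F_{\mathbb{V}}$ containing all projections and closed under composition.) A variety is locally finite if every finitely generated algebra in it is finite, and finitely based if it is defined by finitely many laws. *)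

From Stdlib Require Import List.
Import ListNotations.

Inductive term : Type :=
| Var : nat -> term
| Pc : term
| Zc : term
| Mul : term -> term -> term.

Fixpoint subst (s : nat -> term) (t : term) : term :=
  match t with
  | Var n => s n
  | Pc => Pc
  | Zc => Zc
  | Mul a b => Mul (subst s a) (subst s b)
  end.

Definition law := (term * term)%type.

Inductive derivable (L : list law) : term -> term -> Prop :=
| der_refl : forall t, derivable L t t
| der_sym : forall t u, derivable L t u -> derivable L u t
| der_trans : forall t u v, derivable L t u -> derivable L u v -> derivable L t v
| der_mul : forall a a' b b', derivable L a a' -> derivable L b b' ->
    derivable L (Mul a b) (Mul a' b')
| der_ax : forall l r (s : nat -> term), In (l, r) L ->
    derivable L (subst s l) (subst s r).

Definition x := Var 0.
Definition y := Var 1.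
Definition z := Var 2.

Definition V_laws : list law :=
  [ (Mul Zc x, Zc);
    (Mul x Zc, Zc);
    (Mul (Mul x y) z, Mul (Mul x z) y);
    (Mul x (Mul y z), Zc);
    (Mul (Mul x y) y, Zc) ].

(* Equality in the free algebra F_V (on generators Var 0, Var 1, ...). *)
Definition eqV (t u : term) : Prop := derivable V_laws t u.

Definition finitely_based : Prop :=
  exists L : list law, forall t u, eqV t u <-> derivable L t u.

Record algebra : Type := {
  carrier :> Type;
  a_mul : carrier -> carrier -> carrier;
  a_p : carrier;
  a_0 : carrier }.

Fixpoint eval (A : algebra) (v : nat -> A) (t : term) : A :=
  match t with
  | Var n => v n
  | Pc => a_p A
  | Zc => a_0 A
  | Mul a b => a_mul A (eval A v a) (eval A v b)
  end.

Definition in_V (A : algebra) : Prop :=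
  forall l r, In (l, r) V_laws -> forall v : nat -> A, eval A v l = eval A v r.

Fixpoint vars_below (n : nat) (t : term) : Prop :=
  match t with
  | Var m => m < n
  | Pc | Zc => True
  | Mul a b => vars_below n a /\ vars_below n b
  end.

Definition generated_by (A : algebra) (g : nat -> A) (n : nat) : Prop :=
  forall a : A, exists t, vars_below n t /\ eval A g t = a.

Definition finite_type (T : Type) : Prop := exists l : list T, forall a, In a l.

Definition locally_finite : Prop :=
  forall A : algebra, in_V A ->
  forall (g : nat -> A) (n : nat), generated_by A g n -> finite_type A.

(* A subset of F_V, represented as an eqV-closed predicate on terms. *)
Definition subset_FV (S : term -> Prop) : Prop :=
  forall t u, eqV t u -> S t -> S u.

Definition term_clone (S : term -> Prop) : Prop :=
  subset_FV S /\
  (forall n, S (Var n)) /\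
  (forall (t : term) (s : nat -> term), S t -> (forall n, S (s n)) -> S (subst s t)).

Definition same_subset (S T : term -> Prop) : Prop := forall t, S t <-> T t.

Definition uncountably_many_clones : Prop :=
  forall C : nat -> term -> Prop,
    exists S, term_clone S /\ forall k, ~ same_subset S (C k).

(* Local finiteness: in an algebra of V every product of generators is either 0 or
   a left-normed product h * c_1 * ... * c_k of generators with pairwise distinct c_i,
   since the factors c_i may be permuted, a repeated one kills the product, and a
   product on the right of * gives 0.

   Uncountably many clones: for a set I of naturals let S_I consist of the terms
   equal in V to a variable, to 0, or to p * t_1 * ... * t_k with k in I.  A
   substitution keeps the number k of factors of such a product, so S_I is a term
   clone.  In a model of V whose nonzero products remember their number of
   (distinct, atomic) right factors, p * x_0 * ... * x_(k-1) is nonzero of length k,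
   so it lies in S_I exactly when k is in I, and a diagonal choice of I escapes any
   countable family of clones. *)

From Stdlib Require Import List Arith Lia Bool Classical FunctionalExtensionality.
Import ListNotations.

Definition satisfies (A : algebra) (L : list law) : Prop :=
  forall l r, In (l, r) L -> forall v : nat -> A, eval A v l = eval A v r.

Lemma subst_subst (s s' : nat -> term) (t : term) :
  subst s (subst s' t) = subst (fun n => subst s (s' n)) t.
Proof. induction t; simpl; congruence. Qed.

Lemma derivable_subst (L : list law) (s : nat -> term) (t u : term) :
  derivable L t u -> derivable L (subst s t) (subst s u).
Proof.
  induction 1.
  - apply der_refl.
  - now apply der_sym.
  - eapply der_trans; eauto.
  - now apply der_mul.
  - rewrite !subst_subst; now apply der_ax.
Qed.

Lemma eval_subst (A : algebra) (v : nat -> A) (s : nat -> term) (t : term) :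
  eval A v (subst s t) = eval A (fun n => eval A v (s n)) t.
Proof. induction t; simpl; congruence. Qed.

Lemma derivable_sound (A : algebra) (L : list law) :
  satisfies A L -> forall t u, derivable L t u -> forall v, eval A v t = eval A v u.
Proof.
  intros HA t u H; induction H; intro w; simpl; try congruence.
  rewrite !eval_subst; now apply HA.
Qed.

Definition val3 {T : Type} (a b c : T) : nat -> T :=
  fun n => match n with 0 => a | 1 => b | _ => c end.

Lemma finitely_based_V : finitely_based.
Proof. exists V_laws; reflexivity. Qed.

Section LocallyFinite.

Variable A : algebra.
Hypothesis HA : in_V A.

Local Notation mul := (a_mul A).
Local Notation zero := (a_0 A).

Lemma mul_0_l (a : A) : mul zero a = zero.
Proof. exact (HA (Mul Zc x) Zc ltac:(simpl; auto) (val3 a a a)). Qed.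

Lemma mul_0_r (a : A) : mul a zero = zero.
Proof. exact (HA (Mul x Zc) Zc ltac:(simpl; auto) (val3 a a a)). Qed.

Lemma mul_shuffle0 (a b c : A) : mul (mul a b) c = mul (mul a c) b.
Proof. exact (HA (Mul (Mul x y) z) _ ltac:(simpl; auto) (val3 a b c)). Qed.

Lemma mul_by_product (a b c : A) : mul a (mul b c) = zero.
Proof. exact (HA (Mul x (Mul y z)) Zc ltac:(simpl; auto 6) (val3 a b c)). Qed.

Lemma mul_repeat (a b : A) : mul (mul a b) b = zero.
Proof. exact (HA (Mul (Mul x y) y) Zc ltac:(simpl; auto 7) (val3 a b b)). Qed.

Definition tail_prod (h : A) (l : list A) : A := fold_left mul l h.

Lemma tail_prod_0 (l : list A) : tail_prod zero l = zero.
Proof. induction l as [|c l IH]; simpl; [reflexivity|]. now rewrite mul_0_l. Qed.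

Lemma tail_prod_mul (h c : A) (l : list A) :
  tail_prod (mul h c) l = mul (tail_prod h l) c.
Proof.
  revert h; induction l as [|b l IH]; intro h; simpl; [reflexivity|].
  rewrite mul_shuffle0; apply IH.
Qed.

Lemma tail_prod_repeat (h c : A) (l : list A) :
  In c l -> tail_prod (mul h c) l = zero.
Proof.
  revert h; induction l as [|b l IH]; intros h Hc; [destruct Hc|simpl].
  destruct Hc as [<-|Hc].
  - rewrite mul_repeat; apply tail_prod_0.
  - rewrite mul_shuffle0; now apply IH.
Qed.

Definition reduced (gens : list A) (e : A) : Prop :=
  e = zero \/
  exists h l, In h gens /\ incl l gens /\ NoDup l /\ e = tail_prod h l.

Lemma reduced_gen (gens : list A) (h : A) : In h gens -> reduced gens h.
Proof.
  right; exists h, []; repeat split; auto using NoDup_nil; intros ? [].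
Qed.

Lemma reduced_mul (gens : list A) (a b : A) :
  reduced gens a -> reduced gens b -> reduced gens (mul a b).
Proof.
  intros [-> | (h & l & Hh & Hl & Hnd & ->)] [-> | (h' & l' & Hh' & _ & _ & ->)].
  - left; apply mul_0_l.
  - left; apply mul_0_l.
  - left; apply mul_0_r.
  - destruct l' as [|c l' _] using rev_ind.
    + rewrite <- tail_prod_mul.
      destruct (classic (In h' l)) as [Hin|Hnin].
      * left; now apply tail_prod_repeat.
      * right; exists h, (h' :: l); repeat split; auto using NoDup_cons.
        intros d [<-|Hd]; auto.
    + left; unfold tail_prod; rewrite fold_left_app; apply mul_by_product.
Qed.

Definition gens_of (g : nat -> A) (n : nat) : list A := a_p A :: map g (seq 0 n).

Lemma eval_reduced (g : nat -> A) (n : nat) (t : term) :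
  vars_below n t -> reduced (gens_of g n) (eval A g t).
Proof.
  induction t as [m| | |a IHa b IHb]; simpl; intro Hv.
  - apply reduced_gen; right; apply in_map, in_seq; lia.
  - apply reduced_gen; now left.
  - now left.
  - apply reduced_mul; tauto.
Qed.

End LocallyFinite.

Fixpoint lists_upto {T : Type} (k : nat) (al : list T) : list (list T) :=
  match k with
  | 0 => [[]]
  | S k' => [] :: flat_map (fun c => map (cons c) (lists_upto k' al)) al
  end.

Lemma in_lists_upto {T : Type} (k : nat) (al l : list T) :
  incl l al -> length l <= k -> In l (lists_upto k al).
Proof.
  revert l; induction k as [|k IH]; intros [|c l] Hi Hl; simpl in *; auto; try lia.
  right; apply in_flat_map; exists c; split; [apply Hi; now left|].
  apply in_map, IH; [intros d Hd; apply Hi; now right | lia].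
Qed.

Lemma reduced_finite (A : algebra) (gens : list A) :
  exists es, forall e, reduced A gens e -> In e es.
Proof.
  exists (a_0 A :: flat_map (fun h => map (tail_prod A h) (lists_upto (length gens) gens)) gens).
  intros e [-> | (h & l & Hh & Hl & Hnd & ->)]; [now left | right].
  apply in_flat_map; exists h; split; auto.
  apply in_map, in_lists_upto; auto using NoDup_incl_length.
Qed.

Lemma locally_finite_V : locally_finite.
Proof.
  intros A HA g n Hg.
  destruct (reduced_finite A (gens_of A g n)) as [es Hes].
  exists es; intro a.
  destruct (Hg a) as (t & Ht & <-).
  now apply Hes, eval_reduced.
Qed.

Definition pmul (ts : list term) : term := fold_left Mul ts Pc.

Lemma subst_fold_Mul (s : nat -> term) (ts : list term) (a : term) :
  subst s (fold_left Mul ts a) = fold_left Mul (map (subst s) ts) (subst s a).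
Proof. revert a; induction ts as [|t ts IH]; intro a; simpl; auto. Qed.

Definition clone_of (I : nat -> Prop) (t : term) : Prop :=
  exists w, eqV t w /\
    ((exists m, w = Var m) \/ w = Zc \/ exists ts, w = pmul ts /\ I (length ts)).

Lemma clone_of_term_clone (I : nat -> Prop) : term_clone (clone_of I).
Proof.
  split; [|split].
  - intros t u Htu (w & Hw & Sw); exists w; split; auto.
    eapply der_trans; [apply der_sym|]; eauto.
  - intro n; exists (Var n); split; [apply der_refl | eauto].
  - intros t s (w & Hw & Sw) Hs.
    assert (Hsw : eqV (subst s t) (subst s w)) by now apply derivable_subst.
    destruct Sw as [[m ->] | [-> | (ts & -> & Hts)]].
    + destruct (Hs m) as (w' & Hw' & Sw'); exists w'; split; auto.
      eapply der_trans; eauto.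
    + exists Zc; auto.
    + exists (pmul (map (subst s) ts)); split.
      * unfold pmul in *; now rewrite subst_fold_Mul in Hsw.
      * right; right; exists (map (subst s) ts); now rewrite length_map.
Qed.

(* [MP n T] stands for a nonzero product h * a_1 * ... * a_n of an arbitrary head with
   pairwise distinct atoms [MA a_i]; [T] is the set {a_1, ..., a_n}, and its size [n]
   is stored so that it can be read off.  The constant p is the empty product. *)
Inductive M : Type := MZ | MA (a : nat) | MP (n : nat) (T : nat -> bool).

Definition M_ins (n : nat) (T : nat -> bool) (a : nat) : M :=
  if T a then MZ else MP (S n) (fun c => (c =? a) || T c).
Arguments M_ins : simpl never.

Definition M_mul (u w : M) : M :=
  match u, w with
  | MA _, MA a => M_ins 0 (fun _ => false) a
  | MP n T, MA a => M_ins n T a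
  | _, _ => MZ
  end.

Definition Malg : algebra := Build_algebra M M_mul (MP 0 (fun _ => false)) MZ.

Lemma M_ins_shuffle (n : nat) (T : nat -> bool) (a b : nat) :
  M_mul (M_ins n T a) (MA b) = M_mul (M_ins n T b) (MA a).
Proof.
  unfold M_ins.
  destruct (T a) eqn:Ta, (T b) eqn:Tb; simpl; auto; unfold M_ins.
  all: rewrite ?Ta, ?Tb, ?orb_true_r, ?orb_false_r; auto.
  rewrite (Nat.eqb_sym b a); destruct (a =? b); simpl; auto.
  f_equal; extensionality c; destruct (c =? a), (c =? b); reflexivity.
Qed.

Lemma M_mul_ins_MZ (n : nat) (T : nat -> bool) (a : nat) (w : M) :
  (forall b, w <> MA b) -> M_mul (M_ins n T a) w = MZ.
Proof. unfold M_ins; intro Hw; destruct (T a), w; auto; now destruct (Hw a0). Qed.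

Lemma M_ins_repeat (n : nat) (T : nat -> bool) (a : nat) : M_mul (M_ins n T a) (MA a) = MZ.
Proof.
  unfold M_ins; destruct (T a) eqn:Ta; simpl; auto.
  unfold M_ins; now rewrite Nat.eqb_refl.
Qed.

Lemma M_in_V : in_V Malg.
Proof.
  intros l r Hin v; simpl in Hin.
  destruct Hin as [E|[E|[E|[E|[E|[]]]]]]; injection E as <- <-; simpl.
  - now destruct (v 0).
  - now destruct (v 0).
  - destruct (v 0), (v 1), (v 2); cbn; auto using M_ins_shuffle;
      first [apply M_mul_ins_MZ | symmetry; apply M_mul_ins_MZ]; discriminate.
  - destruct (v 0), (v 1), (v 2); simpl; auto;
      unfold M_ins; destruct (_ : bool); reflexivity.
  - destruct (v 0), (v 1); cbn; auto using M_ins_repeat.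
Qed.

Definition zero_or_len (n : nat) (u : M) : Prop := u = MZ \/ exists T, u = MP n T.

Lemma zero_or_len_mul (n : nat) (u w : M) :
  zero_or_len n u -> zero_or_len (S n) (M_mul u w).
Proof.
  intros [-> | [T ->]]; [now left|].
  destruct w as [|a|]; cbn; try now left.
  unfold M_ins; destruct (T a); [left | right]; eauto.
Qed.

Lemma eval_pmul (v : nat -> M) (ts : list term) :
  zero_or_len (length ts) (eval Malg v (pmul ts)).
Proof.
  unfold pmul.
  enough (H : forall a n, zero_or_len n (eval Malg v a) ->
            zero_or_len (n + length ts) (eval Malg v (fold_left Mul ts a)))
    by (apply (H Pc 0); right; now exists (fun _ => false)).
  induction ts as [|t ts IH]; intros a n Ha; simpl.
  - now rewrite Nat.add_0_r.
  - rewrite <- Nat.add_succ_comm; apply IH, zero_or_len_mul, Ha.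
Qed.

Definition pvars (k : nat) : term := pmul (map Var (seq 0 k)).

Lemma eval_pvars (k : nat) :
  exists T, eval Malg MA (pvars k) = MP k T /\ forall c, k <= c -> T c = false.
Proof.
  induction k as [|k (T & ET & HT)]; [now exists (fun _ => false)|].
  unfold pvars, pmul in *.
  rewrite seq_S, map_app, fold_left_app; simpl; rewrite ET; cbn.
  unfold M_ins; rewrite HT by lia.
  eexists; split; [reflexivity|].
  intros c Hc; cbn beta; rewrite HT, orb_false_r by lia; apply Nat.eqb_neq; lia.
Qed.

Lemma clone_of_pvars (I : nat -> Prop) (k : nat) : clone_of I (pvars k) <-> I k.
Proof.
  split.
  - intros (w & Hw & Sw).
    pose proof (derivable_sound Malg V_laws M_in_V _ _ Hw MA) as E.
    destruct (eval_pvars k) as (T & ET & _); rewrite ET in E.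
    destruct Sw as [[m ->] | [-> | (ts & -> & Hts)]]; try discriminate.
    destruct (eval_pmul MA ts) as [Ez | (T' & Ets)].
    + rewrite Ez in E; discriminate.
    + rewrite Ets in E; now injection E as ->.
  - intro Hk; exists (pvars k); split; [apply der_refl|].
    right; right; exists (map Var (seq 0 k)); split; [reflexivity|].
    now rewrite length_map, length_seq.
Qed.

Lemma uncountably_many_clones_V : uncountably_many_clones.
Proof.
  intro C; exists (clone_of (fun k => ~ C k (pvars k))).
  split; [apply clone_of_term_clone|].
  intros k Hk; specialize (Hk (pvars k)).
  rewrite clone_of_pvars in Hk; tauto.
Qed.

Theorem mainTheorem1 :
  finitely_based /\ locally_finite /\ uncountably_many_clones.
Proof.
  exact (conj finitely_based_V (conj locally_finite_V uncountably_many_clones_V)).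
Qed.
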